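(* Let $d \geq 1$ be an integer and let $v = (v_1,\dots,v_d) \in \mathbb{C}^d$. Then there exists a nonempty subset $S \subseteq [d] = \{1,\dots,d\}$ such that \[ \frac{1}{\sqrt{|S|}} \left| \sum_{j \in S} v_j \right| \geq \frac{\|v\|_2}{8\sqrt{\log_2(d) + 3}}, \] where $\|v\|_2 = \left(\sum_{j=1}^d |v_j|^2\right)^{1/2}$. *)

From Stdlib Require Import Reals.
From Coquelicot Require Import Coquelicot.
Open Scope R_scope.

(* Indices [d] = {1..d} are represented as 0..d-1. A subset S of [d] is a
   boolean predicate on nat, restricted to indices < d. *)

Fixpoint subset_sum (v : nat -> C) (S : nat -> bool) (d : nat) : C :=
  match d with
  | O => 0%C
  | Datatypes.S n => Cplus (subset_sum v S n) (if S n then v n else 0%C)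
  end.

Fixpoint subset_card (S : nat -> bool) (d : nat) : nat :=
  match d with
  | O => O
  | Datatypes.S n => (subset_card S n + (if S n then 1 else 0))%nat
  end.

Fixpoint norm2_sq (v : nat -> C) (d : nat) : R :=
  match d with
  | O => 0
  | Datatypes.S n => norm2_sq v n + (Cmod (v n)) ^ 2
  end.

Definition norm2 (v : nat -> C) (d : nat) : R := sqrt (norm2_sq v d).

Definition log2 (x : R) : R := ln x / ln 2.

(* Split the plane into the four closed quarter-planes around the directions
   1, -1, i, -i.  One of them carries a quarter of ||v||^2, and on it the
   projection a_j of v_j onto that direction satisfies a_j >= 0 and
   |v_j|^2 <= 2 a_j^2.  If |sum_S v| < c sqrt |S| for every nonempty S, then
   also sum_S a < c sqrt |S|; repeatedly removing the smallest a_j from a set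
   of size k costs at most c^2/k, so sum a_j^2 <= c^2 H_d <= c^2 (1 + ln d).
   Hence ||v||^2 <= 8 c^2 (1 + log2 d), which fails for
   c = ||v|| / (8 sqrt (log2 d + 3)). *)
From Stdlib Require Import Reals Lra Lia Classical Bool.
From Coquelicot Require Import Coquelicot.
Open Scope R_scope.

Definition subset_nonempty (S : nat -> bool) (n : nat) : Prop :=
  exists j, (j < n)%nat /\ S j = true.

Definition subset_incl (S T : nat -> bool) (n : nat) : Prop :=
  forall j, (j < n)%nat -> S j = true -> T j = true.

Fixpoint rsum (g : nat -> R) (S : nat -> bool) (n : nat) : R :=
  match n with
  | O => 0
  | Datatypes.S m => rsum g S m + (if S m then g m else 0)
  end.

Fixpoint harmonic (k : nat) : R :=
  match k with
  | O => 0
  | Datatypes.S m => harmonic m + / INR (Datatypes.S m)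
  end.

Lemma rsum_ext g S1 S2 n : (forall j, (j < n)%nat -> S1 j = S2 j) ->
  rsum g S1 n = rsum g S2 n.
Proof.
  induction n as [|n IH]; intros H; simpl; [reflexivity|].
  rewrite IH by (intros; apply H; lia). rewrite H by lia. reflexivity.
Qed.

Lemma rsum_le g h S n : (forall j, (j < n)%nat -> S j = true -> g j <= h j) ->
  rsum g S n <= rsum h S n.
Proof.
  induction n as [|n IH]; intros H; simpl; [lra|].
  assert (rsum g S n <= rsum h S n) by (apply IH; intros; apply H; auto; lia).
  destruct (S n) eqn:E; [|lra]. specialize (H n ltac:(lia) E). lra.
Qed.

Lemma rsum_scal k g S n : rsum (fun j => k * g j) S n = k * rsum g S n.
Proof. induction n as [|n IH]; simpl; [ring|]. rewrite IH. destruct (S n); ring. Qed.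

Lemma subset_card_rsum S n : INR (subset_card S n) = rsum (fun _ => 1) S n.
Proof.
  induction n as [|n IH]; simpl; [reflexivity|].
  rewrite plus_INR, IH. destruct (S n); simpl; lra.
Qed.

Lemma subset_card_le S n : (subset_card S n <= n)%nat.
Proof. induction n as [|n IH]; simpl; [lia|]. destruct (S n); lia. Qed.

Lemma subset_card_pos S n : (0 < subset_card S n)%nat <-> subset_nonempty S n.
Proof.
  induction n as [|n IH]; simpl.
  - split; [lia|]. intros [j [Hj _]]; lia.
  - destruct (S n) eqn:E.
    + split; [intros _; exists n; auto|lia].
    + rewrite Nat.add_0_r, IH. split; intros [j [Hj HS]].
      * exists j; split; auto; lia.
      * exists j; split; auto. destruct (Nat.eq_dec j n); [congruence|lia].
Qed.

Lemma rsum_card0 g S n : subset_card S n = 0%nat -> rsum g S n = 0.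
Proof.
  induction n as [|n IH]; simpl; [reflexivity|].
  destruct (S n); [lia|]. intros H. rewrite IH by lia. ring.
Qed.

Lemma rsum_ge_card_mul g S n m : (forall j, (j < n)%nat -> S j = true -> m <= g j) ->
  INR (subset_card S n) * m <= rsum g S n.
Proof.
  intros H. rewrite subset_card_rsum, Rmult_comm, <- rsum_scal.
  apply rsum_le. intros j Hj HS. rewrite Rmult_1_r. auto.
Qed.

Lemma rsum_remove g T n j0 : (j0 < n)%nat -> T j0 = true ->
  rsum g T n = rsum g (fun j => T j && negb (j =? j0)%nat) n + g j0.
Proof.
  induction n as [|n IH]; intros Hj HT; [lia|]. simpl.
  destruct (Nat.eq_dec j0 n) as [->|Hne].
  - rewrite Nat.eqb_refl, HT, andb_false_r.
    rewrite (rsum_ext g T (fun j => T j && negb (j =? n)%nat) n); [lra|].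
    intros j Hj'. destruct (Nat.eqb_spec j n); [lia|]. now rewrite andb_true_r.
  - rewrite IH by (auto; lia).
    destruct (Nat.eqb_spec n j0); [lia|]. rewrite andb_true_r. lra.
Qed.

Lemma exists_argmin (a : nat -> R) T n : subset_nonempty T n ->
  exists j0, (j0 < n)%nat /\ T j0 = true /\
    forall j, (j < n)%nat -> T j = true -> a j0 <= a j.
Proof.
  induction n as [|n IH]; intros [j [Hj HT]]; [lia|].
  destruct (classic (subset_nonempty T n)) as [Hex|Hnex].
  - destruct (IH Hex) as [j0 [Hj0 [HT0 Hmin]]].
    destruct (T n) eqn:E; [destruct (Rle_dec (a j0) (a n))|].
    + exists j0; repeat split; auto. intros k Hk HTk.
      destruct (Nat.eq_dec k n); [subst; auto|]. apply Hmin; auto; lia.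
    + exists n; repeat split; auto. intros k Hk HTk.
      destruct (Nat.eq_dec k n); [subst; lra|].
      specialize (Hmin k ltac:(lia) HTk). lra.
    + exists j0; repeat split; auto. intros k Hk HTk.
      destruct (Nat.eq_dec k n); [subst; congruence|]. apply Hmin; auto; lia.
  - assert (Hn : forall k, (k < n)%nat -> T k = false).
    { intros k Hk. destruct (T k) eqn:E; auto. exfalso; apply Hnex; now exists k. }
    assert (j = n) as -> by (destruct (Nat.eq_dec j n); auto; rewrite Hn in HT; [discriminate|lia]).
    exists n; repeat split; auto. intros k Hk HTk.
    destruct (Nat.eq_dec k n); [subst; lra|]. rewrite Hn in HTk; [discriminate|lia].
Qed.

Lemma sq_le_of_mul_le_sqrt K m c : 0 < K -> 0 <= m -> K * m <= c * sqrt K ->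
  m ^ 2 <= c ^ 2 / K.
Proof.
  intros HK Hm H.
  assert (Hs : 0 < sqrt K) by (apply sqrt_lt_R0; lra).
  assert (HsK : sqrt K * sqrt K = K) by (apply sqrt_sqrt; lra).
  assert (Hmc : sqrt K * m <= c).
  { apply (Rmult_le_reg_l (sqrt K)); auto. rewrite <- Rmult_assoc, HsK. lra. }
  assert (Hsq : K * m ^ 2 <= c ^ 2).
  { rewrite <- HsK. replace (sqrt K * sqrt K * m ^ 2) with ((sqrt K * m) ^ 2) by ring.
    apply pow_incr. split; [nra|auto]. }
  apply (Rmult_le_reg_l K); auto. field_simplify; lra.
Qed.

(* Removing the smallest a_j0 from T of size k: applying the hypothesis to T
   itself gives k a_j0 <= sum_T a <= c sqrt k, so a_j0^2 <= c^2 / k. *)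
Lemma rsum_sq_le_harmonic n c (a : nat -> R) T :
  (forall j, (j < n)%nat -> T j = true -> 0 <= a j) ->
  (forall S, subset_incl S T n -> subset_nonempty S n ->
     rsum a S n <= c * sqrt (INR (subset_card S n))) ->
  rsum (fun j => a j ^ 2) T n <= c ^ 2 * harmonic (subset_card T n).
Proof.
  remember (subset_card T n) as k eqn:Hk. revert T Hk.
  induction k as [|k IH]; intros T Hk Hpos Hsub.
  - rewrite rsum_card0 by auto. simpl. lra.
  - destruct (exists_argmin a T n) as [j0 [Hj0 [HT0 Hmin]]].
    { apply subset_card_pos. lia. }
    set (T' := fun j => T j && negb (j =? j0)%nat).
    assert (HincT' : subset_incl T' T n)
      by (intros j _ HT; unfold T' in HT; now apply andb_prop in HT).
    assert (Hk' : k = subset_card T' n).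
    { assert (E := rsum_remove (fun _ => 1) T n j0 Hj0 HT0).
      rewrite <- !subset_card_rsum, <- Hk, S_INR in E. fold T' in E. apply INR_eq. lra. }
    assert (HIH : rsum (fun j => a j ^ 2) T' n <= c ^ 2 * harmonic k).
    { apply IH; [exact Hk'| |].
      - intros j Hj HT. apply Hpos, HincT'; auto.
      - intros S HS. apply Hsub. intros j Hj HSj. apply HincT', HS; auto. }
    assert (Hmin_sq : a j0 ^ 2 <= c ^ 2 / INR (Datatypes.S k)).
    { apply sq_le_of_mul_le_sqrt; auto.
      - apply lt_0_INR. lia.
      - rewrite Hk. eapply Rle_trans; [apply rsum_ge_card_mul, Hmin|].
        apply Hsub; [intros j _ H; exact H|]. apply subset_card_pos. lia. }
    rewrite (rsum_remove _ T n j0 Hj0 HT0). fold T'. cbn [harmonic].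
    unfold Rdiv in Hmin_sq. lra.
Qed.

Lemma harmonic_mono k m : (k <= m)%nat -> harmonic k <= harmonic m.
Proof.
  induction 1 as [|m _ IH]; [lra|]. cbn [harmonic].
  assert (0 < / INR (Datatypes.S m)) by (apply Rinv_0_lt_compat, lt_0_INR; lia). lra.
Qed.

Lemma inv_succ_le_ln_diff k : (1 <= k)%nat ->
  / INR (Datatypes.S k) <= ln (INR (Datatypes.S k)) - ln (INR k).
Proof.
  intros Hk. rewrite S_INR. set (x := INR k).
  assert (Hx : 1 <= x) by (apply (le_INR 1); lia).
  rewrite <- ln_div by lra.
  assert (Hexp := exp_ineq1_le (ln (x / (x + 1)))).
  rewrite exp_ln in Hexp by (apply Rdiv_lt_0_compat; lra).
  assert (x / (x + 1) = 1 - / (x + 1)) by (field; lra).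
  replace ((x + 1) / x) with (/ (x / (x + 1))) by (field; lra).
  rewrite ln_Rinv by (apply Rdiv_lt_0_compat; lra). lra.
Qed.

Lemma harmonic_le_1_ln k : (1 <= k)%nat -> harmonic k <= 1 + ln (INR k).
Proof.
  induction 1 as [|m Hm IH].
  - simpl. rewrite ln_1. lra.
  - cbn [harmonic]. pose proof (inv_succ_le_ln_diff m Hm). lra.
Qed.

Lemma ln_le_log2 x : 1 <= x -> ln x <= log2 x.
Proof.
  intros Hx. unfold log2.
  assert (Hln2 : 0 < ln 2 < 1).
  { split; [rewrite <- ln_1; apply ln_increasing; lra|].
    rewrite <- (ln_exp 1). apply ln_increasing; [lra|].
    pose proof (exp_ineq1 1 ltac:(lra)). lra. }
  assert (0 <= ln x) by (rewrite <- ln_1; apply ln_le; lra).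
  apply (Rmult_le_reg_r (ln 2)); [lra|].
  unfold Rdiv. rewrite Rmult_assoc, Rinv_l by lra. nra.
Qed.

Lemma harmonic_le_1_log2 k : (1 <= k)%nat -> harmonic k <= 1 + log2 (INR k).
Proof.
  intros Hk. pose proof (harmonic_le_1_ln k Hk).
  pose proof (ln_le_log2 (INR k) ltac:(apply (le_INR 1); lia)). lra.
Qed.

Lemma norm2_sq_nonneg v n : 0 <= norm2_sq v n.
Proof. induction n as [|n IH]; simpl; [lra|]. pose proof (pow2_ge_0 (Cmod (v n))). lra. Qed.

Definition axis_proj (q : nat) (z : C) : R :=
  match q with
  | O => fst z
  | 1%nat => - fst z
  | 2%nat => snd z
  | _ => - snd z
  end.

Definition quarter (v : nat -> C) (q : nat) (j : nat) : bool :=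
  if Rle_dec 0 (axis_proj q (v j)) then
    if Rle_dec (Cmod (v j) ^ 2) (2 * axis_proj q (v j) ^ 2) then true else false
  else false.

Lemma axis_proj_le_Cmod q z : axis_proj q z <= Cmod z.
Proof.
  pose proof (Cmod2_alt z). pose proof (Cmod_ge_0 z). unfold Re, Im in *.
  assert (axis_proj q z ^ 2 <= Cmod z ^ 2) by (destruct q as [|[|[|]]]; simpl; nra).
  nra.
Qed.

Lemma axis_proj_sum q v S n :
  axis_proj q (subset_sum v S n) = rsum (fun j => axis_proj q (v j)) S n.
Proof.
  induction n as [|n IH]; [destruct q as [|[|[|]]]; simpl; lra|].
  cbn [subset_sum rsum]. rewrite <- IH.
  destruct (S n); destruct q as [|[|[|]]]; unfold axis_proj, Cplus; simpl; lra.
Qed.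

Lemma quarter_spec v q j : quarter v q j = true ->
  0 <= axis_proj q (v j) /\ Cmod (v j) ^ 2 <= 2 * axis_proj q (v j) ^ 2.
Proof.
  unfold quarter. destruct Rle_dec; [|discriminate]. destruct Rle_dec; [auto|discriminate].
Qed.

Lemma quarter_cover v j : exists q, (q < 4)%nat /\ quarter v q j = true.
Proof.
  pose proof (Cmod2_alt (v j)) as Hmod. unfold Re, Im in Hmod. unfold quarter.
  destruct (Rle_dec (snd (v j) ^ 2) (fst (v j) ^ 2));
    [destruct (Rle_dec 0 (fst (v j))); [exists 0%nat|exists 1%nat]
    |destruct (Rle_dec 0 (snd (v j))); [exists 2%nat|exists 3%nat]];
    (split; [lia|]); simpl axis_proj;
    (destruct Rle_dec; [|lra]); (destruct Rle_dec; [reflexivity|nra]).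
Qed.

Lemma norm2_sq_le_quarter_sums v n :
  norm2_sq v n <= rsum (fun j => Cmod (v j) ^ 2) (quarter v 0) n
                + rsum (fun j => Cmod (v j) ^ 2) (quarter v 1) n
                + rsum (fun j => Cmod (v j) ^ 2) (quarter v 2) n
                + rsum (fun j => Cmod (v j) ^ 2) (quarter v 3) n.
Proof.
  induction n as [|n IH]; cbn [norm2_sq rsum]; [lra|].
  destruct (quarter_cover v n) as [q [Hq HT]].
  assert (0 <= Cmod (v n) ^ 2) by apply pow2_ge_0.
  destruct (quarter v 0 n) eqn:E0; destruct (quarter v 1 n) eqn:E1;
  destruct (quarter v 2 n) eqn:E2; destruct (quarter v 3 n) eqn:E3; try lra.
  exfalso. destruct q as [|[|[|[|]]]]; try congruence; lia.
Qed.

Lemma exists_heavy_quarter v n :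
  exists q, norm2_sq v n <= 4 * rsum (fun j => Cmod (v j) ^ 2) (quarter v q) n.
Proof.
  pose proof (norm2_sq_le_quarter_sums v n).
  destruct (Rle_dec (norm2_sq v n) (4 * rsum (fun j => Cmod (v j) ^ 2) (quarter v 0) n));
    [exists 0%nat; auto|].
  destruct (Rle_dec (norm2_sq v n) (4 * rsum (fun j => Cmod (v j) ^ 2) (quarter v 1) n));
    [exists 1%nat; auto|].
  destruct (Rle_dec (norm2_sq v n) (4 * rsum (fun j => Cmod (v j) ^ 2) (quarter v 2) n));
    [exists 2%nat; auto|].
  exists 3%nat. lra.
Qed.

Lemma inv_sqrt_mul_nonneg k x : 0 <= x -> 0 <= / sqrt k * x.
Proof.
  intros Hx. destruct (sqrt_pos k) as [Hk|Hk].
  - apply Rmult_le_pos; [left; apply Rinv_0_lt_compat|]; auto.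
  - rewrite <- Hk, Rinv_0. lra.
Qed.

Lemma le_mul_sqrt_of_inv_sqrt_mul_lt k x c : 0 < k -> / sqrt k * x < c ->
  x <= c * sqrt k.
Proof.
  intros Hk H. assert (Hs : 0 < sqrt k) by (apply sqrt_lt_R0; lra).
  apply (Rmult_lt_compat_l (sqrt k)) in H; auto.
  rewrite <- Rmult_assoc, Rinv_r in H by lra. lra.
Qed.

Lemma norm2_sq_le_harmonic v n c :
  (forall S, subset_nonempty S n ->
     / sqrt (INR (subset_card S n)) * Cmod (subset_sum v S n) < c) ->
  norm2_sq v n <= 8 * c ^ 2 * harmonic n.
Proof.
  intros Hsub. destruct (exists_heavy_quarter v n) as [q Hq].
  set (T := quarter v q) in Hq |- *. set (a := fun j => axis_proj q (v j)).
  assert (Hmod : rsum (fun j => Cmod (v j) ^ 2) T n <= 2 * rsum (fun j => a j ^ 2) T n).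
  { rewrite <- rsum_scal. apply rsum_le. intros j _ HT. now apply quarter_spec in HT. }
  assert (Ha : rsum (fun j => a j ^ 2) T n <= c ^ 2 * harmonic (subset_card T n)).
  { apply rsum_sq_le_harmonic.
    - intros j _ HT. now apply quarter_spec in HT.
    - intros S _ HS. unfold a. rewrite <- axis_proj_sum.
      eapply Rle_trans; [apply axis_proj_le_Cmod|].
      apply le_mul_sqrt_of_inv_sqrt_mul_lt, Hsub, HS.
      apply lt_0_INR, subset_card_pos, HS. }
  assert (c ^ 2 * harmonic (subset_card T n) <= c ^ 2 * harmonic n)
    by (apply Rmult_le_compat_l; [apply pow2_ge_0|apply harmonic_mono, subset_card_le]).
  lra.
Qed.

Theorem mainTheorem1 (d : nat) (v : nat -> C) (hd : (1 <= d)%nat) :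
  exists S : nat -> bool,
    (exists j, (j < d)%nat /\ S j = true) /\
    / sqrt (INR (subset_card S d)) * Cmod (subset_sum v S d)
      >= norm2 v d / (8 * sqrt (log2 (INR d) + 3)).
Proof.
  apply NNPP; intros Hno.
  set (L := log2 (INR d)). set (c := norm2 v d / (8 * sqrt (L + 3))).
  assert (Hsmall : forall S, subset_nonempty S d ->
            / sqrt (INR (subset_card S d)) * Cmod (subset_sum v S d) < c).
  { intros S HS. apply Rnot_ge_lt. intros Hge. apply Hno. now exists S. }
  assert (Hc : 0 < c).
  { eapply Rle_lt_trans; [apply inv_sqrt_mul_nonneg, Cmod_ge_0|].
    apply (Hsmall (fun j => (j =? 0)%nat)). now exists 0%nat. }
  assert (Hnorm := norm2_sq_le_harmonic v d c Hsmall).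
  assert (HlogL := harmonic_le_1_log2 d hd). fold L in HlogL.
  assert (0 <= harmonic d) by apply (harmonic_mono 0 d), Nat.le_0_l.
  assert (Hc2 : 64 * (L + 3) * c ^ 2 = norm2_sq v d).
  { unfold c, norm2, Rdiv.
    rewrite Rpow_mult_distr, pow_inv, Rpow_mult_distr, !pow2_sqrt
      by (apply norm2_sq_nonneg || lra).
    field. lra. }
  nra.
Qed.
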